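(* Let $(A,C,k)$ be an instance and let $W$ be an exhaustive committee that is $B$-priceable for some budget $B\ge k$. Then the representation ratio of $W$ is at least $\frac12$.
   Context: An instance $(A,C,k)$ consists of a finite nonempty candidate set $C$, voters $N=\{1,\dots,n\}$, approval sets $A_i\subseteq C$, and a committee size $1\le k\le|C|$. $N_c=\{i:c\in A_i\}$. A committee $W\subseteq C$ is exhaustive if $|W|=k$. $\mathrm{cov}(W)=|\{i:A_i\cap W\ne\emptyset\}|$; the representation ratio is $\mathrm{cov}(W)/\max\{\mathrm{cov}(W'):|W'|=k\}$. For $B>0$, $W$ is $B$-priceable if there are $p_i:C\to\mathbb{R}_{\ge0}$ ($i\in N$) with: $p_i(c)=0$ for $c\notin A_i$; $\sum_c p_i(c)\le B/n$ for all $i$; $\sum_i p_i(c)=1$ for $c\in W$; $\sum_i p_i(c)=0$ for $c\notin W$; and $\sum_{i\in N_c}\left(\frac Bn-\sum_{c'\in C}p_i(c')\right)\le1$ for every $c\notin W$. *)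

From mathcomp Require Import all_boot all_order all_algebra.
Set Implicit Arguments. Unset Strict Implicit. Unset Printing Implicit Defensive.
Import Order.TTheory GRing.Theory Num.Theory.
Local Open Scope ring_scope.

Definition supporters (C : finType) (n : nat) (A : 'I_n -> {set C}) (c : C)
  : {set 'I_n} := [set i | c \in A i].

Definition cov (C : finType) (n : nat) (A : 'I_n -> {set C}) (W : {set C}) : nat :=
  #|[set i : 'I_n | A i :&: W != set0]|.

Definition max_cov (C : finType) (n : nat) (A : 'I_n -> {set C}) (k : nat) : nat :=
  (\max_(W' : {set C} | #|W'| == k) cov A W')%N.

Definition representation_ratio (R : realFieldType) (C : finType) (n : nat)
  (A : 'I_n -> {set C}) (k : nat) (W : {set C}) : R :=
  (cov A W)%:R / (max_cov A k)%:R.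

Definition priceable (R : realFieldType) (C : finType) (n : nat)
  (A : 'I_n -> {set C}) (W : {set C}) (B : R) : Prop :=
  exists p : 'I_n -> C -> R,
    (forall i c, 0 <= p i c) /\
        (forall i c, c \notin A i -> p i c = 0) /\
        (forall i, \sum_(c : C) p i c <= B / n%:R) /\
        (forall c, c \in W -> \sum_(i : 'I_n) p i c = 1) /\
        (forall c, c \notin W -> \sum_(i : 'I_n) p i c = 0) /\
        (forall c, c \notin W ->
           \sum_(i in supporters A c) (B / n%:R - \sum_(c' : C) p i c') <= 1).

(* Let S be the voters covered by W and d = B/n the per-voter budget.  Voters
   outside S approve no member of W, and nobody pays for a candidate outside W,
   so they spend nothing: the k units paid for W come from S, whence k <= |S| d.
   The leftover condition then says that any candidate c is approved by at most
   1/d voters outside S (none if c is in W).  A rival committee W' of size k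
   therefore covers at most |S| voters of S and at most k/d <= |S| voters
   outside S, so cov(W') <= 2 cov(W). *)
From mathcomp Require Import all_boot all_order all_algebra.
Set Implicit Arguments. Unset Strict Implicit. Unset Printing Implicit Defensive.
Import Order.TTheory GRing.Theory Num.Theory.
Local Open Scope ring_scope.

Lemma card_bigcup_le (I T : finType) (P : pred I) (F : I -> {set T}) :
  (#|\bigcup_(i | P i) F i| <= \sum_(i | P i) #|F i|)%N.
Proof.
elim/big_rec2: _ => [|c m U _ leUm]; first by rewrite cards0.
by rewrite (leq_trans (leq_card_setU _ U).1) ?leq_add2l.
Qed.

Definition covered (C : finType) (n : nat) (A : 'I_n -> {set C}) (W : {set C})
  : {set 'I_n} := [set i | A i :&: W != set0].

Section Coverage.
Variables (C : finType) (n : nat) (A : 'I_n -> {set C}).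

Lemma cov_covered (W : {set C}) : cov A W = #|covered A W|.
Proof. by []. Qed.

Lemma supporters_sub_covered (W : {set C}) c :
  c \in W -> supporters A c \subset covered A W.
Proof.
move=> cW; apply/subsetP => i; rewrite !inE => ci.
by apply/set0Pn; exists c; rewrite inE ci.
Qed.

Lemma cov_le_covered_add_supporters (W W' : {set C}) :
  (cov A W' <= cov A W + \sum_(c in W') #|supporters A c :\: covered A W|)%N.
Proof.
rewrite !cov_covered -(cardsID (covered A W) (covered A W')) leq_add //.
  exact/subset_leq_card/subsetIr.
apply: leq_trans (card_bigcup_le _ _); apply/subset_leq_card/subsetP => i.
rewrite !inE => /andP [iS /set0Pn [c]]; rewrite inE => /andP [ci cW'].
by apply/bigcupP; exists c; rewrite // !inE iS.
Qed.

End Coverage.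

Section Priceability.
Variables (R : realFieldType) (C : finType) (n : nat) (A : 'I_n -> {set C}).
Variables (W : {set C}) (B : R) (p : 'I_n -> C -> R).
Hypothesis p_ge0 : forall i c, 0 <= p i c.
Hypothesis p_approved : forall i c, c \notin A i -> p i c = 0.
Hypothesis p_budget : forall i, \sum_(c : C) p i c <= B / n%:R.
Hypothesis p_elected : forall c, c \in W -> \sum_(i : 'I_n) p i c = 1.
Hypothesis p_rejected : forall c, c \notin W -> \sum_(i : 'I_n) p i c = 0.
Hypothesis p_leftover : forall c, c \notin W ->
  \sum_(i in supporters A c) (B / n%:R - \sum_(c' : C) p i c') <= 1.

Local Notation d := (B / n%:R).
Local Notation S := (covered A W).

Lemma uncovered_pays_nothing i c : i \notin S -> p i c = 0.
Proof.
rewrite inE negbK => /eqP AiW.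
have [ci|] := boolP (c \in A i); last exact: p_approved.
have cW : c \notin W.
  by apply: contra_eqN AiW => cW; apply/set0Pn; exists c; rewrite inE ci.
by move/psumr_eq0P: (p_rejected cW); apply.
Qed.

Lemma card_le_covered_budget : #|W|%:R <= #|S|%:R * d.
Proof.
have -> : #|W|%:R = \sum_(c in W) \sum_i p i c.
  by rewrite -sum1_card natr_sum; apply: eq_bigr => c /p_elected.
rewrite exchange_big (bigID (mem S)) /= [X in _ + X]big1 ?addr0; last first.
  by move=> i iS; apply: big1 => c _; apply: uncovered_pays_nothing.
rewrite mulr_natl -sumr_const; apply: ler_sum => i _.
apply: le_trans (p_budget i); rewrite [X in _ <= X](bigID (mem W)) /=.
by rewrite lerDl sumr_ge0.
Qed.

Lemma uncovered_supporters_budget c :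
  c \notin W -> #|supporters A c :\: S|%:R * d <= 1.
Proof.
move=> cW; apply: le_trans (p_leftover cW); rewrite (bigID (mem S)) /=.
have -> : \sum_(i in supporters A c | i \notin S) (d - \sum_c' p i c') =
          \sum_(i in supporters A c :\: S) d.
  apply: eq_big => [i|i /andP [_ iS]]; first by rewrite !inE andbC.
  by rewrite big1 ?subr0 // => c' _; apply: uncovered_pays_nothing.
rewrite sumr_const mulr_natl lerDr sumr_ge0 // => i _.
by rewrite subr_ge0 p_budget.
Qed.

Lemma sum_uncovered_supporters_le (W' : {set C}) : #|W'| = #|W| ->
  (\sum_(c in W') #|supporters A c :\: S| <= #|S|)%N.
Proof.
move=> eqW'W.
have sum_le : (\sum_(c in W') #|supporters A c :\: S|)%:R * d <= #|S|%:R * d.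
  apply: le_trans card_le_covered_budget.
  rewrite natr_sum mulr_suml -eqW'W -sum1_card natr_sum; apply: ler_sum => c _.
  have [cW|] := boolP (c \in W); last exact: uncovered_supporters_budget.
  have /eqP -> : supporters A c :\: S == set0 by rewrite setD_eq0 supporters_sub_covered.
  by rewrite cards0 mul0r.
have [d_gt0 | d_le0] := ltP 0 d; first by rewrite (ler_pM2r d_gt0) ler_nat in sum_le.
(* A nonpositive budget can only pay for the empty committee. *)
have : #|W|%:R <= 0%:R :> R.
  by apply: le_trans card_le_covered_budget _; rewrite mulr_ge0_le0.
rewrite ler_nat leqn0 -eqW'W => /eqP /cards0_eq ->.
by rewrite big_set0.
Qed.

Lemma cov_le_twice (W' : {set C}) : #|W'| = #|W| -> (cov A W' <= 2 * cov A W)%N.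
Proof.
move=> eqW'W; apply: leq_trans (cov_le_covered_add_supporters A W W') _.
by rewrite mul2n -addnn leq_add2l sum_uncovered_supporters_le.
Qed.

End Priceability.

Lemma priceable_max_cov_le (R : realFieldType) (C : finType) (n : nat)
  (A : 'I_n -> {set C}) (W : {set C}) (B : R) :
  priceable A W B -> (max_cov A #|W| <= 2 * cov A W)%N.
Proof.
case=> p [p_ge0 [p_approved [p_budget [p_elected [p_rejected p_leftover]]]]].
apply/bigmax_leqP => W' /eqP eqW'W.
exact: (cov_le_twice p_ge0 p_approved p_budget p_elected p_rejected p_leftover).
Qed.

Theorem theorem11 (R : realFieldType) (C : finType) (n : nat)
  (A : 'I_n -> {set C}) (k : nat) (W : {set C}) (B : R) :
  (0 < #|C|)%N -> (1 <= k)%N -> (k <= #|C|)%N ->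
  #|W| = k ->
  k%:R <= B ->
  priceable A W B ->
  (0 < max_cov A k)%N ->
  1 / 2 <= representation_ratio R A k W.
Proof.
move=> _ _ _ <- _ /priceable_max_cov_le max_le max_gt0.
rewrite /representation_ratio ler_pdivlMr ?ltr0n // mul1r ler_pdivrMl //.
by rewrite -natrM ler_nat.
Qed.
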